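(* Let $H_1,\dots,H_n$, $PV_1,\dots,PV_n$, $I$, $F_1,\dots,F_n$ and $G$ be as follows: the $p$-values have arbitrary joint dependence, $I$ is the set of true nulls, $F_i$ is the null distribution function of $PV_i$ (so $P(PV_j\le x)=F_j(x)$ for $j\in I$) with $F_i(u)\le u$ for all $u\in(0,1)$, and $G(x)=\sum_{i=1}^nF_i(x)$. Let $0=\tilde y_0\le\tilde y_1\le\cdots\le\tilde y_n$ with $\tilde y_n>0$, define $D=\sum_{i=1}^n\frac{1}{i}(\tilde y_i-\tilde y_{i-1})$, and for $\alpha\in(0,1)$ set $y_i=\frac{\alpha}{D}\tilde y_i$. Let $0\le c_1\le\cdots\le c_n\le1$ satisfy $G(c_i)\le y_i$ for $i=1,\dots,n$. Then the step-up procedure with critical values $c$ satisfies $\mathrm{FDR}(c)\le\alpha$. In particular, for $\tilde y_i=i$ one has $D=\sum_{i=1}^n 1/i$, and for $\tilde y_i=i(i+1)$ one has $D=2n$.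
   Context: Step-up procedure with critical values $c_1\le\cdots\le c_n$: let $PV_{(1)}\le\cdots\le PV_{(n)}$ be the ordered $p$-values with corresponding hypotheses $H_{(1)},\dots,H_{(n)}$; let $k=\max\{i: PV_{(i)}\le c_i\}$ and reject $H_{(1)},\dots,H_{(k)}$; if no such $i$ exists, reject nothing. With $R$ the number of rejections and $V$ the number of rejected true null hypotheses, $\mathrm{FDR}(c)=E[V/\max(R,1)]$. *)

From Stdlib Require Import Reals Lra List Orders Sorting.Mergesort.
Open Scope R_scope.

(* ---------- Probability space ----------
   A (finitely additive) probability on ALL events of a sample space Omega.
   Every genuine probability space extends to such an object (finitely
   additive extension of a probability to the power set), so a statement
   proved for all such objects covers all probability spaces. *)
Record FAProb (Omega : Type) := {
  Pr : (Omega -> Prop) -> R;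
  Pr_nonneg : forall A, 0 <= Pr A;
  Pr_total : Pr (fun _ => True) = 1;
  Pr_ext : forall A B : Omega -> Prop, (forall w, A w <-> B w) -> Pr A = Pr B;
  Pr_add : forall A B : Omega -> Prop, (forall w, A w -> B w -> False) ->
           Pr (fun w => A w \/ B w) = Pr A + Pr B
}.
Arguments Pr {Omega} _ _.

Definition is_cdf (F : R -> R) : Prop :=
  (forall x y, x <= y -> F x <= F y) /\
  (forall x, 0 <= F x <= 1) /\
  (forall x eps, 0 < eps -> exists delta, 0 < delta /\
       forall y, x <= y < x + delta -> Rabs (F y - F x) < eps) /\
  (forall eps, 0 < eps -> exists M, forall x, x <= M -> F x < eps) /\
  (forall eps, 0 < eps -> exists M, forall x, M <= x -> 1 - eps < F x).

Fixpoint sumR_upto (b : nat) (f : nat -> R) : R :=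
  match b with O => f O | S b' => sumR_upto b' f + f b end.
Definition sum_1_to (n : nat) (f : nat -> R) : R :=
  match n with O => 0 | S _ => sumR_upto n f - f O end.

Definition Gfun (n : nat) (F : nat -> R -> R) (x : R) : R :=
  sum_1_to n (fun i => F i x).

Definition Dsum (n : nat) (yt : nat -> R) : R :=
  sum_1_to n (fun i => (yt i - yt (i - 1)%nat) / INR i).

Module PairLe <: TotalLeBool.
  Definition t := (nat * R)%type.
  Definition leb (x y : t) : bool := if Rle_dec (snd x) (snd y) then true else false.
  Theorem leb_total : forall x y, leb x y = true \/ leb y x = true.
  Proof.
    intros x y; unfold leb; destruct (Rle_dec (snd x) (snd y)); auto.
    destruct (Rle_dec (snd y) (snd x)); auto. lra.
  Qed.
End PairLe.
Module PairSort := Sort PairLe.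

(* hypotheses indexed 1..n; the list of (index, p-value) sorted by p-value:
   its i-th element (0-based) is (index of H_(i+1), PV_(i+1)). *)
Definition sorted_pvals (n : nat) (pv : nat -> R) : list (nat * R) :=
  PairSort.sort (map (fun j => (j, pv j)) (seq 1 n)).

Fixpoint stepup_k (l : list (nat * R)) (c : nat -> R) (i0 : nat) : nat :=
  match i0 with
  | O => O
  | S i' => if Rle_dec (snd (nth i' l (O, 0))) (c i0) then i0 else stepup_k l c i'
  end.

Definition num_rej (n : nat) (c : nat -> R) (pv : nat -> R) : nat :=
  stepup_k (sorted_pvals n pv) c n.

Definition rejected (n : nat) (c : nat -> R) (pv : nat -> R) : list nat :=
  map fst (firstn (num_rej n c pv) (sorted_pvals n pv)).

Definition num_false_rej (n : nat) (I : nat -> bool) (c : nat -> R) (pv : nat -> R) : nat :=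
  length (filter I (rejected n c pv)).

(* FDR(c) = E[ V / max(R,1) ]; V/max(R,1) is a simple random variable with
   values v/max(r,1), 0 <= v, r <= n, so its expectation is the finite sum. *)
Definition FDR {Omega : Type} (P : FAProb Omega) (n : nat) (I : nat -> bool)
  (PV : nat -> Omega -> R) (c : nat -> R) : R :=
  sumR_upto n (fun r => sumR_upto n (fun v =>
    INR v / INR (Nat.max r 1) *
    Pr P (fun w => num_false_rej n I c (fun j => PV j w) = v /\
                   num_rej n c (fun j => PV j w) = r))).

From Stdlib Require Import Reals Lra Lia List Sorted Permutation ClassicalEpsilon.
Open Scope R_scope.

(* With N_k the number of true nulls with p-value at most c_k, all V rejected
   true nulls have p-value at most PV_(R) <= c_R, so V <= N_R; as N is
   nondecreasing, telescoping gives the pointwise bound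
     V / max(R,1) <= sum_{k=1}^n (1/k - 1/(k+1)) N_k + N_n / (n+1).
   The right-hand side is a linear combination of indicators of the events
   {PV_j <= c_k}, so integrating (which only needs finite additivity) bounds
   the FDR by the same combination of the G(c_k) <= y_k, and Abel summation
   turns that into sum_k (y_k - y_{k-1}) / k = alpha. *)

Fixpoint sumL {A} (f : A -> R) (l : list A) : R :=
  match l with nil => 0 | x :: l' => f x + sumL f l' end.

Section ListSums.
Context {A : Type}.
Implicit Types (f g : A -> R) (l : list A).

Lemma sumL_app f l1 l2 : sumL f (l1 ++ l2) = sumL f l1 + sumL f l2.
Proof. induction l1 as [|x l1 IH]; simpl; [lra | rewrite IH; lra]. Qed.

Lemma sumL_add f g l : sumL (fun x => f x + g x) l = sumL f l + sumL g l.
Proof. induction l as [|x l IH]; simpl; [ring | rewrite IH; ring]. Qed.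

Lemma sumL_ext f g l : (forall x, In x l -> f x = g x) -> sumL f l = sumL g l.
Proof.
  induction l as [|x l IH]; intros H; simpl; [reflexivity|].
  rewrite H, IH; simpl; auto.
  intros y Hy; apply H; simpl; auto.
Qed.

Lemma sumL_le f g l : (forall x, In x l -> f x <= g x) -> sumL f l <= sumL g l.
Proof.
  induction l as [|x l IH]; intros H; simpl; [lra|].
  assert (f x <= g x) by (apply H; simpl; auto).
  assert (sumL f l <= sumL g l) by (apply IH; intros; apply H; simpl; auto). lra.
Qed.

Lemma sumL_const a l : sumL (fun _ => a) l = a * INR (length l).
Proof.
  induction l as [|x l IH]; simpl sumL; [simpl; ring|].
  rewrite IH, length_cons, S_INR. ring.
Qed.

Lemma sumL_zero f l : (forall x, In x l -> f x = 0) -> sumL f l = 0.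
Proof. intros H. rewrite (sumL_ext f (fun _ => 0)) by exact H. rewrite sumL_const. ring. Qed.

Lemma sumL_nonneg f l : (forall x, In x l -> 0 <= f x) -> 0 <= sumL f l.
Proof. intros H. rewrite <- (sumL_zero (fun _ => 0) l) by auto. apply sumL_le. exact H. Qed.

Lemma sumL_scal a f l : sumL (fun x => a * f x) l = a * sumL f l.
Proof. induction l as [|x l IH]; simpl; [ring | rewrite IH; ring]. Qed.

Lemma sumL_delta f l x0 : NoDup l -> In x0 l -> (forall x, x <> x0 -> f x = 0) ->
  sumL f l = f x0.
Proof.
  intros Hnd Hx0 Hf; induction Hnd as [|x l Hx Hnd IH]; [contradiction|].
  simpl. destruct Hx0 as [<- | Hx0].
  - rewrite sumL_zero; [ring|]. intros y Hy. apply Hf. intros ->. contradiction.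
  - rewrite Hf, IH by (auto; intros ->; contradiction). ring.
Qed.

Lemma sumL_count (b : A -> bool) l :
  sumL (fun x => if b x then 1 else 0) l = INR (length (filter b l)).
Proof.
  induction l as [|x l IH]; simpl; [reflexivity|].
  rewrite IH. destruct (b x); simpl length; [rewrite S_INR|]; ring.
Qed.

End ListSums.

Lemma sumL_map {A B} (f : B -> R) (h : A -> B) l : sumL f (map h l) = sumL (fun x => f (h x)) l.
Proof. induction l as [|x l IH]; simpl; [reflexivity | rewrite IH; reflexivity]. Qed.

Lemma sumL_flat_map {A B} (f : B -> R) (g : A -> list B) l :
  sumL f (flat_map g l) = sumL (fun x => sumL f (g x)) l.
Proof. induction l as [|x l IH]; simpl; [reflexivity | rewrite sumL_app, IH; reflexivity]. Qed.

Lemma sumR_upto_seq n f : sumR_upto n f = sumL f (seq 0 (S n)).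
Proof.
  induction n as [|n IH]; [simpl; ring|].
  rewrite seq_S, sumL_app, <- IH. simpl. ring.
Qed.

Lemma sum_1_to_seq n f : sum_1_to n f = sumL f (seq 1 n).
Proof. destruct n as [|n]; [reflexivity|]. unfold sum_1_to. rewrite sumR_upto_seq. simpl. ring. Qed.

(* A list [(a_i, A_i)] encodes the simple function [sum_i a_i 1_{A_i}]: its
   value at [w] is [wsum (fun A => indicator A w)], its expectation [wsum (Pr P)]. *)
Definition wsum {E} (phi : E -> R) (L : list (R * E)) : R :=
  sumL (fun p => fst p * phi (snd p)) L.

Definition scale {E} (a : R) (L : list (R * E)) : list (R * E) :=
  map (fun p => (a * fst p, snd p)) L.

Lemma wsum_app {E} (phi : E -> R) L1 L2 : wsum phi (L1 ++ L2) = wsum phi L1 + wsum phi L2.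
Proof. apply sumL_app. Qed.

Lemma wsum_scale {E} (phi : E -> R) a L : wsum phi (scale a L) = a * wsum phi L.
Proof.
  unfold wsum, scale. rewrite sumL_map, <- sumL_scal.
  apply sumL_ext. intros p _. simpl. ring.
Qed.

Section FinitelyAdditive.
Context {Omega : Type} (P : FAProb Omega).

Definition indicator (A : Omega -> Prop) (w : Omega) : R :=
  if excluded_middle_informative (A w) then 1 else 0.

Lemma indicator_true (A : Omega -> Prop) w : A w -> indicator A w = 1.
Proof. unfold indicator; destruct excluded_middle_informative; tauto. Qed.

Lemma indicator_false (A : Omega -> Prop) w : ~ A w -> indicator A w = 0.
Proof. unfold indicator; destruct excluded_middle_informative; tauto. Qed.

Lemma indicator_bool (b : Omega -> bool) w :
  indicator (fun w => b w = true) w = if b w then 1 else 0.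
Proof.
  destruct (b w) eqn:E; [apply indicator_true | apply indicator_false]; congruence.
Qed.

Lemma Pr_empty (A : Omega -> Prop) : (forall w, ~ A w) -> Pr P A = 0.
Proof.
  intros H.
  pose proof (Pr_add _ P A A (fun w a _ => H w a)) as Hadd.
  rewrite (Pr_ext _ P (fun w => A w \/ A w) A) in Hadd by (intros; tauto). lra.
Qed.

Lemma Pr_split (S B : Omega -> Prop) :
  Pr P S = Pr P (fun w => S w /\ B w) + Pr P (fun w => S w /\ ~ B w).
Proof.
  rewrite <- Pr_add by (intros w [] []; tauto).
  apply Pr_ext. intros w. destruct (excluded_middle_informative (B w)); tauto.
Qed.

(* [c] carries the weights of the events already known to contain [S]; splitting
   [S] along the next event, the pointwise hypothesis passes to both halves. *)
Lemma wsum_restrict_nonneg (L : list (R * (Omega -> Prop))) : forall S c,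
  (forall w, S w -> 0 <= c + wsum (fun A => indicator A w) L) ->
  0 <= c * Pr P S + wsum (fun A => Pr P (fun w => A w /\ S w)) L.
Proof.
  unfold wsum.
  induction L as [|[a B] L IH]; intros S c H; simpl.
  - destruct (excluded_middle_informative (exists w, S w)) as [[w Sw] | none].
    + specialize (H w Sw); simpl in H. pose proof (Pr_nonneg _ P S). nra.
    + rewrite Pr_empty by (intros w Sw; apply none; eauto). lra.
  - assert (HB := IH (fun w => S w /\ B w) (c + a)).
    assert (HnB := IH (fun w => S w /\ ~ B w) c).
    assert (Hsplit : forall p : R * (Omega -> Prop),
      fst p * Pr P (fun w => snd p w /\ S w) =
      fst p * Pr P (fun w => snd p w /\ S w /\ B w) +
      fst p * Pr P (fun w => snd p w /\ S w /\ ~ B w)).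
    { intros [b C]; simpl. rewrite (Pr_split (fun w => C w /\ S w) B).
      rewrite (Pr_ext _ P (fun w => (C w /\ S w) /\ B w) (fun w => C w /\ S w /\ B w)),
              (Pr_ext _ P (fun w => (C w /\ S w) /\ ~ B w) (fun w => C w /\ S w /\ ~ B w))
        by (intros; tauto). ring. }
    rewrite (sumL_ext _ _ L (fun p _ => Hsplit p)), sumL_add.
    rewrite (Pr_split S B), (Pr_ext _ P (fun w => B w /\ S w) (fun w => S w /\ B w))
      by (intros; tauto).
    assert (0 <= (c + a) * Pr P (fun w => S w /\ B w) +
      sumL (fun p => fst p * Pr P (fun w => snd p w /\ S w /\ B w)) L).
    { apply HB. intros w [Sw Bw]. specialize (H w Sw); simpl in H.
      rewrite indicator_true in H by exact Bw. lra. }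
    assert (0 <= c * Pr P (fun w => S w /\ ~ B w) +
      sumL (fun p => fst p * Pr P (fun w => snd p w /\ S w /\ ~ B w)) L).
    { apply HnB. intros w [Sw nBw]. specialize (H w Sw); simpl in H.
      rewrite indicator_false in H by exact nBw. lra. }
    lra.
Qed.

Lemma wsum_Pr_mono (L1 L2 : list (R * (Omega -> Prop))) :
  (forall w, wsum (fun A => indicator A w) L1 <= wsum (fun A => indicator A w) L2) ->
  wsum (Pr P) L1 <= wsum (Pr P) L2.
Proof.
  intros H.
  pose proof (wsum_restrict_nonneg (L2 ++ scale (-1) L1) (fun _ => True) 0) as Hdiff.
  assert (Htrue : forall L, wsum (fun A => Pr P (fun w => A w /\ True)) L = wsum (Pr P) L).
  { intros L. apply sumL_ext. intros p _. rewrite (Pr_ext _ P _ (snd p)) by (intros; tauto).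
    reflexivity. }
  rewrite Htrue, !wsum_app, !wsum_scale in Hdiff.
  enough (0 <= wsum (Pr P) L2 + -1 * wsum (Pr P) L1) by lra.
  replace (wsum (Pr P) L2 + -1 * wsum (Pr P) L1) with
    (0 * Pr P (fun _ => True) + (wsum (Pr P) L2 + -1 * wsum (Pr P) L1)) by ring.
  apply Hdiff. intros w _. rewrite wsum_app, wsum_scale. specialize (H w). lra.
Qed.

End FinitelyAdditive.

(* The Abel-summed form of [sum_{k=1}^m (N k - N (k-1)) / k] (see [abel_sum_Dsum]);
   unlike that form it does not involve [N 0]. *)
Definition abel_sum (N : nat -> R) (m : nat) : R :=
  sumL (fun k => (1 / INR k - 1 / INR (S k)) * N k) (seq 1 m) + N m / INR (S m).

Lemma abel_weight_nonneg k : (1 <= k)%nat -> 0 <= 1 / INR k - 1 / INR (S k).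
Proof.
  intros Hk. destruct k as [|k]; [lia|].
  assert (0 < INR (S k)) by (apply lt_0_INR; lia).
  rewrite (S_INR (S k)). unfold Rdiv; rewrite !Rmult_1_l.
  assert (/ (INR (S k) + 1) <= / INR (S k)) by (apply Rinv_le_contravar; lra). lra.
Qed.

Lemma abel_sum_succ N m :
  abel_sum N (S m) = abel_sum N m + (N (S m) - N m) / INR (S m).
Proof.
  unfold abel_sum. rewrite seq_S, sumL_app. cbn [sumL]. replace (1 + m)%nat with (S m) by lia.
  assert (0 < INR (S m)) by (apply lt_0_INR; lia).
  assert (0 < INR (S (S m))) by (apply lt_0_INR; lia).
  field. lra.
Qed.

Lemma abel_sum_nonneg N m : (forall k, 0 <= N k) -> 0 <= abel_sum N m.
Proof.
  intros HN. unfold abel_sum.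
  assert (0 < INR (S m)) by (apply lt_0_INR; lia).
  apply Rplus_le_le_0_compat.
  - apply sumL_nonneg. intros k Hk. apply in_seq in Hk.
    apply Rmult_le_pos; [apply abel_weight_nonneg; lia | apply HN].
  - apply Rmult_le_pos; [apply HN | apply Rlt_le, Rinv_0_lt_compat; lra].
Qed.

Lemma abel_sum_ge N r m : (forall k, 0 <= N k) ->
  (forall k, (r <= k < m)%nat -> N k <= N (S k)) -> (1 <= r <= m)%nat ->
  N r / INR r <= abel_sum N m.
Proof.
  intros HN Hmono Hr. induction m as [|m IH]; [lia|].
  assert (0 < INR (S m)) by (apply lt_0_INR; lia).
  destruct (Nat.eq_dec r (S m)) as [->|Hne].
  - unfold abel_sum. rewrite seq_S, sumL_app. cbn [sumL]. replace (1 + m)%nat with (S m) by lia.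
    assert (0 <= sumL (fun k => (1 / INR k - 1 / INR (S k)) * N k) (seq 1 m)).
    { apply sumL_nonneg. intros k Hk. apply in_seq in Hk.
    apply Rmult_le_pos; [apply abel_weight_nonneg; lia | apply HN]. }
    assert (0 < INR (S (S m))) by (apply lt_0_INR; lia).
    replace (N (S m) / INR (S m)) with
      ((1 / INR (S m) - 1 / INR (S (S m))) * N (S m) + N (S m) / INR (S (S m))) by (field; lra).
    lra.
  - rewrite abel_sum_succ.
    assert (0 <= (N (S m) - N m) / INR (S m)).
    { apply Rmult_le_pos; [|apply Rlt_le, Rinv_0_lt_compat; lra].
      assert (N m <= N (S m)) by (apply Hmono; lia). lra. }
    assert (N r / INR r <= abel_sum N m) by (apply IH; [intros; apply Hmono|]; lia).
    lra.
Qed.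

Lemma abel_sum_le N M m : (forall k, (1 <= k <= m)%nat -> N k <= M k) -> N m <= M m ->
  abel_sum N m <= abel_sum M m.
Proof.
  intros HNM HNMm. unfold abel_sum.
  assert (0 < INR (S m)) by (apply lt_0_INR; lia).
  apply Rplus_le_compat.
  - apply sumL_le. intros k Hk. apply in_seq in Hk.
    apply Rmult_le_compat_l; [apply abel_weight_nonneg | apply HNM]; lia.
  - apply Rmult_le_compat_r; [apply Rlt_le, Rinv_0_lt_compat |]; lra.
Qed.

Lemma abel_sum_scal a N m : abel_sum (fun k => a * N k) m = a * abel_sum N m.
Proof.
  unfold abel_sum.
  rewrite (sumL_ext _ (fun k => a * ((1 / INR k - 1 / INR (S k)) * N k))) by (intros; ring).
  rewrite sumL_scal. unfold Rdiv. ring.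
Qed.

Lemma abel_sum_Dsum y m : y O = 0 -> abel_sum y m = Dsum m y.
Proof.
  intros Hy0. unfold Dsum. rewrite sum_1_to_seq.
  induction m as [|m IH].
  - unfold abel_sum. simpl. rewrite Hy0. lra.
  - rewrite abel_sum_succ, IH, seq_S, sumL_app. simpl. replace (m - 0)%nat with m by lia. ring.
Qed.

Lemma ratio_le_abel_sum n N (v : R) r : (forall k, 0 <= N k) ->
  (forall k, (1 <= k < n)%nat -> N k <= N (S k)) -> (r <= n)%nat ->
  (r = O -> v = 0) -> ((1 <= r)%nat -> v <= N r) ->
  v / INR (Nat.max r 1) <= abel_sum N n.
Proof.
  intros HN Hmono Hrn Hv0 Hv. destruct r as [|r].
  - rewrite Hv0 by reflexivity. unfold Rdiv. rewrite Rmult_0_l. apply abel_sum_nonneg, HN.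
  - replace (Nat.max (S r) 1) with (S r) by lia.
    assert (0 < INR (S r)) by (apply lt_0_INR; lia).
    apply Rle_trans with (N (S r) / INR (S r)).
    + apply Rmult_le_compat_r; [apply Rlt_le, Rinv_0_lt_compat; lra | apply Hv; lia].
    + apply abel_sum_ge; [exact HN | intros; apply Hmono; lia | lia].
Qed.

Definition abel_events {E} (Ls : nat -> list (R * E)) (m : nat) : list (R * E) :=
  flat_map (fun k => scale (1 / INR k - 1 / INR (S k)) (Ls k)) (seq 1 m)
  ++ scale (/ INR (S m)) (Ls m).

Lemma wsum_abel_events {E} (phi : E -> R) Ls m :
  wsum phi (abel_events Ls m) = abel_sum (fun k => wsum phi (Ls k)) m.
Proof.
  unfold abel_events, abel_sum. rewrite wsum_app, wsum_scale.
  unfold wsum at 1. rewrite sumL_flat_map.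
  rewrite (sumL_ext _ (fun k => (1 / INR k - 1 / INR (S k)) * wsum phi (Ls k)))
    by (intros k _; apply wsum_scale).
  unfold Rdiv. ring.
Qed.

Lemma StronglySorted_firstn_nth {A} (Rl : A -> A -> Prop) (d : A) l k x :
  (forall y, Rl y y) -> StronglySorted Rl l -> (0 < k <= length l)%nat ->
  In x (firstn k l) -> Rl x (nth (k - 1) l d).
Proof.
  intros Hrefl Hs. revert k.
  induction Hs as [|a l Hs IH Ha]; intros k Hk Hx; simpl in Hk; [lia|].
  destruct k as [|k]; [lia|]. change (In x (a :: firstn k l)) in Hx.
  replace (S k - 1)%nat with k by lia.
  destruct Hx as [<-|Hx].
  - destruct k as [|k]; [apply Hrefl|].
    rewrite Forall_forall in Ha. cbn [nth]. apply Ha, nth_In. lia.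
  - destruct k as [|k]; [destruct Hx|].
    specialize (IH (S k) ltac:(lia) Hx). replace (S k - 1)%nat with k in IH by lia. exact IH.
Qed.

Section SortedPvalues.
Variables (n : nat) (pv : nat -> R).

Lemma sorted_pvals_perm : Permutation (map (fun j => (j, pv j)) (seq 1 n)) (sorted_pvals n pv).
Proof. apply PairSort.Permuted_sort. Qed.

Lemma length_sorted_pvals : length (sorted_pvals n pv) = n.
Proof. rewrite <- (Permutation_length sorted_pvals_perm), length_map, length_seq. reflexivity. Qed.

Lemma in_sorted_pvals y : In y (sorted_pvals n pv) -> In (fst y) (seq 1 n) /\ snd y = pv (fst y).
Proof.
  intros H. apply (Permutation_in _ (Permutation_sym sorted_pvals_perm)), in_map_iff in H.
  destruct H as [j [<- Hj]]. simpl. auto.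
Qed.

Lemma NoDup_sorted_pvals : NoDup (map fst (sorted_pvals n pv)).
Proof.
  apply (Permutation_NoDup (Permutation_map fst sorted_pvals_perm)).
  rewrite map_map, map_id. apply seq_NoDup.
Qed.

Lemma sorted_pvals_sorted :
  StronglySorted (fun p q => is_true (PairLe.leb p q)) (sorted_pvals n pv).
Proof.
  apply Sorted_StronglySorted; [|apply PairSort.Sorted_sort].
  intros x y z. unfold is_true, PairLe.leb.
  repeat destruct Rle_dec; auto; lra.
Qed.

End SortedPvalues.

Lemma stepup_k_le l c i0 : (stepup_k l c i0 <= i0)%nat.
Proof. induction i0; simpl; [lia|]. destruct Rle_dec; lia. Qed.

Lemma stepup_k_spec l c i0 : (1 <= stepup_k l c i0)%nat ->
  snd (nth (stepup_k l c i0 - 1) l (O, 0)) <= c (stepup_k l c i0).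
Proof.
  induction i0; simpl; [lia|]. destruct Rle_dec as [h|h]; auto.
  intros _. replace (S i0 - 1)%nat with i0 by lia. exact h.
Qed.

Definition null_le (I : nat -> bool) (pv : nat -> R) (x : R) (j : nat) : bool :=
  I j && (if Rle_dec (pv j) x then true else false).

Definition null_count (n : nat) (I : nat -> bool) (pv : nat -> R) (x : R) : nat :=
  length (filter (null_le I pv x) (seq 1 n)).

Lemma filter_length_mono {A} (f g : A -> bool) l : (forall x, f x = true -> g x = true) ->
  (length (filter f l) <= length (filter g l))%nat.
Proof.
  intros H; induction l as [|x l IH]; simpl; [lia|].
  destruct (f x) eqn:E; [rewrite (H x E); simpl; lia|].
  destruct (g x); simpl; lia.
Qed.

Lemma null_count_mono n I pv x x' : x <= x' -> (null_count n I pv x <= null_count n I pv x')%nat.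
Proof.
  intros Hx. apply filter_length_mono. intros j. unfold null_le.
  destruct (I j); [|discriminate]. simpl. do 2 destruct Rle_dec; auto; lra.
Qed.

Section StepUp.
Variables (n : nat) (I : nat -> bool) (c pv : nat -> R).

Lemma num_rej_le : (num_rej n c pv <= n)%nat.
Proof. apply stepup_k_le. Qed.

Lemma num_false_rej_le : (num_false_rej n I c pv <= num_rej n c pv)%nat.
Proof.
  unfold num_false_rej, rejected.
  eapply Nat.le_trans; [apply filter_length_le|].
  rewrite length_map. apply firstn_le_length.
Qed.

Lemma num_false_rej_0 : num_rej n c pv = O -> num_false_rej n I c pv = O.
Proof. unfold num_false_rej, rejected. intros ->. reflexivity. Qed.

(* Every rejected hypothesis has a p-value at most PV_(R) <= c_R. *)
Lemma num_false_rej_le_null_count : (1 <= num_rej n c pv)%nat ->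
  (num_false_rej n I c pv <= null_count n I pv (c (num_rej n c pv)))%nat.
Proof.
  intros Hk. pose proof num_rej_le as Hkn.
  unfold num_false_rej, rejected, null_count.
  set (k := num_rej n c pv) in *.
  assert (Hlast : snd (nth (k - 1) (sorted_pvals n pv) (O, 0)) <= c k)
    by (apply stepup_k_spec; exact Hk).
  apply NoDup_incl_length.
  - apply NoDup_filter. rewrite <- firstn_map.
    apply (NoDup_app_remove_r _ (skipn k (map fst (sorted_pvals n pv)))).
    rewrite firstn_skipn. apply NoDup_sorted_pvals.
  - intros j Hj. apply filter_In in Hj as [Hj Ij].
    apply in_map_iff in Hj as [y [<- Hy]].
    assert (Hle : is_true (PairLe.leb y (nth (k - 1) (sorted_pvals n pv) (O, 0)))).
    { apply (StronglySorted_firstn_nth (fun p q => is_true (PairLe.leb p q)));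
        [| apply sorted_pvals_sorted | rewrite length_sorted_pvals; lia | exact Hy].
      intros p. unfold is_true, PairLe.leb. destruct Rle_dec; [reflexivity | lra]. }
    unfold is_true, PairLe.leb in Hle. destruct Rle_dec as [Hle'|]; [|discriminate].
    assert (Hyl : In y (sorted_pvals n pv))
      by (rewrite <- (firstn_skipn k (sorted_pvals n pv)); apply in_or_app; auto).
    destruct (in_sorted_pvals n pv y Hyl) as [Hs Hsnd].
    apply filter_In. split; [exact Hs|].
    unfold null_le. rewrite Ij. destruct Rle_dec; [reflexivity | lra].
Qed.

End StepUp.

Lemma fdp_le_abel_sum n I c pv : (forall k, (1 <= k < n)%nat -> c k <= c (S k)) ->
  INR (num_false_rej n I c pv) / INR (Nat.max (num_rej n c pv) 1) <=
  abel_sum (fun k => INR (null_count n I pv (c k))) n.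
Proof.
  intros Hc. apply ratio_le_abel_sum.
  - intros k. apply pos_INR.
  - intros k Hk. apply le_INR, null_count_mono, Hc, Hk.
  - apply num_rej_le.
  - intros H0. rewrite num_false_rej_0 by exact H0. reflexivity.
  - intros H1. apply le_INR, num_false_rej_le_null_count, H1.
Qed.

Section Events.
Context {Omega : Type} (P : FAProb Omega) (n : nat) (I : nat -> bool)
  (PV : nat -> Omega -> R) (c : nat -> R).

Definition fdr_events : list (R * (Omega -> Prop)) :=
  flat_map (fun r => map (fun v => (INR v / INR (Nat.max r 1),
      fun w => num_false_rej n I c (fun j => PV j w) = v /\
               num_rej n c (fun j => PV j w) = r))
    (seq 0 (S n))) (seq 0 (S n)).

Lemma FDR_wsum : FDR P n I PV c = wsum (Pr P) fdr_events.
Proof.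
  unfold FDR, fdr_events, wsum. rewrite sumL_flat_map, sumR_upto_seq.
  apply sumL_ext. intros r _. rewrite sumL_map, sumR_upto_seq. reflexivity.
Qed.

Lemma wsum_fdr_events w :
  wsum (fun A => indicator A w) fdr_events =
  INR (num_false_rej n I c (fun j => PV j w)) / INR (Nat.max (num_rej n c (fun j => PV j w)) 1).
Proof.
  set (pv := fun j => PV j w).
  assert (HR := num_rej_le n c pv).
  assert (HV := num_false_rej_le n I c pv).
  unfold fdr_events, wsum. rewrite sumL_flat_map.
  rewrite (sumL_delta _ _ (num_rej n c pv)); [| apply seq_NoDup | apply in_seq; lia |].
  - rewrite sumL_map, (sumL_delta _ _ (num_false_rej n I c pv));
      [| apply seq_NoDup | apply in_seq; lia |].
    + simpl. rewrite indicator_true by auto. ring.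
    + intros v Hv. simpl. rewrite indicator_false by (intros [Hv' _]; auto). ring.
  - intros r Hr. rewrite sumL_map. apply sumL_zero. intros v _. simpl.
    rewrite indicator_false by (intros [_ Hr']; auto). ring.
Qed.

Definition null_events (x : R) : list (R * (Omega -> Prop)) :=
  map (fun j => (1, fun w => null_le I (fun i => PV i w) x j = true)) (seq 1 n).

Lemma wsum_null_events_indicator x w :
  wsum (fun A => indicator A w) (null_events x) = INR (null_count n I (fun j => PV j w) x).
Proof.
  unfold null_events, null_count, wsum. rewrite sumL_map, <- sumL_count.
  apply sumL_ext. intros j _. simpl. rewrite indicator_bool. ring.
Qed.

Lemma wsum_null_events_Pr (F : nat -> R -> R) x :
  (forall j, (1 <= j <= n)%nat -> 0 <= F j x) ->
  (forall j, I j = true -> Pr P (fun w => PV j w <= x) = F j x) ->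
  wsum (Pr P) (null_events x) <= Gfun n F x.
Proof.
  intros HF0 HPV. unfold null_events, Gfun, wsum. rewrite sumL_map, sum_1_to_seq.
  apply sumL_le. intros j Hj. apply in_seq in Hj. simpl. rewrite Rmult_1_l.
  unfold null_le. destruct (I j) eqn:Ij; simpl.
  - rewrite <- HPV by exact Ij. right. apply Pr_ext. intros w.
    destruct Rle_dec; split; congruence || auto; discriminate.
  - rewrite Pr_empty by discriminate. apply HF0. lia.
Qed.

End Events.

Lemma Dsum_harmonic n : Dsum n (fun i => INR i) = sum_1_to n (fun i => 1 / INR i).
Proof.
  unfold Dsum. rewrite !sum_1_to_seq. apply sumL_ext. intros j Hj. apply in_seq in Hj.
  rewrite minus_INR by lia. assert (0 < INR j) by (apply lt_0_INR; lia).
  simpl INR. field. lra.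
Qed.

Lemma Dsum_pronic n : Dsum n (fun i => INR i * (INR i + 1)) = 2 * INR n.
Proof.
  unfold Dsum. rewrite sum_1_to_seq, (sumL_ext _ (fun _ => 2)), sumL_const, length_seq.
  - reflexivity.
  - intros j Hj. apply in_seq in Hj.
    rewrite minus_INR by lia. assert (0 < INR j) by (apply lt_0_INR; lia).
    simpl INR. field. lra.
Qed.

Theorem corollary1
  (Omega : Type) (P : FAProb Omega) (n : nat)
  (PV : nat -> Omega -> R)
  (I : nat -> bool)
  (F : nat -> R -> R)
  (yt : nat -> R) (alpha : R) (c : nat -> R)
  (HI : forall j, I j = true -> (1 <= j <= n)%nat)
  (HFcdf : forall i, (1 <= i <= n)%nat -> is_cdf (F i))
  (HFu : forall i u, (1 <= i <= n)%nat -> 0 < u < 1 -> F i u <= u)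
  (HPV : forall j x, I j = true -> Pr P (fun w => PV j w <= x) = F j x)
  (Hyt0 : yt 0%nat = 0)
  (Hytmon : forall i, (1 <= i <= n)%nat -> yt (i - 1)%nat <= yt i)
  (Hytn : 0 < yt n)
  (Halpha : 0 < alpha < 1)
  (Hc1 : 0 <= c 1%nat)
  (Hcmon : forall i, (1 <= i < n)%nat -> c i <= c (S i))
  (Hcn : c n <= 1)
  (HG : forall i, (1 <= i <= n)%nat ->
        Gfun n F (c i) <= alpha / Dsum n yt * yt i) :
  FDR P n I PV c <= alpha /\
  Dsum n (fun i => INR i) = sum_1_to n (fun i => 1 / INR i) /\
  Dsum n (fun i => INR i * (INR i + 1)) = 2 * INR n.
Proof.
  (* Without them
     [Dsum n yt] may vanish, and then [alpha / 0 = 0] gives a trivial bound. *)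
  split; [| split; [apply Dsum_harmonic | apply Dsum_pronic]].
  set (D := Dsum n yt).
  set (Ls := fun k => null_events n I PV (c k)).
  assert (HLs : forall k, (1 <= k <= n)%nat -> wsum (Pr P) (Ls k) <= alpha / D * yt k).
  { intros k Hk. apply Rle_trans with (Gfun n F (c k)); [| exact (HG k Hk)].
    apply wsum_null_events_Pr; [| intros j Ij; apply HPV, Ij].
    intros j Hj. destruct (HFcdf j Hj) as [_ [Hbnd _]]. apply Hbnd. }
  apply Rle_trans with (wsum (Pr P) (abel_events Ls n)).
  { rewrite FDR_wsum. apply wsum_Pr_mono. intros w.
    rewrite wsum_fdr_events, wsum_abel_events.
    apply Rle_trans with (abel_sum (fun k => INR (null_count n I (fun j => PV j w) (c k))) n).
    - apply fdp_le_abel_sum, Hcmon.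
    - apply abel_sum_le; intros; unfold Ls; rewrite wsum_null_events_indicator; lra. }
  rewrite wsum_abel_events.
  apply Rle_trans with (abel_sum (fun k => alpha / D * yt k) n).
  { apply abel_sum_le; [exact HLs|].
    destruct (Nat.eq_dec n 0) as [Hn0 | Hn0]; [| apply HLs; lia].
    unfold Ls, null_events, wsum. rewrite Hn0, Hyt0. simpl. lra. }
  rewrite abel_sum_scal, abel_sum_Dsum by exact Hyt0. fold D.
  destruct (Req_dec D 0) as [-> | HD].
  - unfold Rdiv. rewrite Rinv_0. lra.
  - field_simplify; lra.
Qed.
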